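(* Let $k\ge0$, $n,q\ge1$, $\mathcal{X}\subset\mathbb{R}^n$ open, and let $\Psi\in C^0(\mathcal{X},\mathbb{R}^q)$ if $k=0$, or $\Psi\in C^k_b(\mathcal{X},\mathbb{R}^q)$ if $k\ge1$, be globally Lipschitz continuous with constant $K_\Psi\in[0,\infty)$ (w.r.t. $\|\cdot\|_\infty$). Fix $K\in[0,\infty)$, $\tau\in(0,T]$ and $w,\tilde w\in(0,\infty)$ with $$K\tau\ \ge\ 2\Big(1+\frac{K_\Psi}{w\tilde w}\Big).$$ Then, with $m=\max\{n,q\}$, there exists a (non-augmented) neural DDE $\Phi\in\mathrm{NDDE}^k_\tau(\mathcal{X},\mathbb{R}^q)$ with $\Phi(x)=\Psi(x)$ for all $x\in\mathcal{X}$, such that its vector field $F:\mathbb{R}\times\Omega_y\to\mathbb{R}^m$ is globally Lipschitz continuous in the second variable on $\mathbb{R}\times\Omega_0$ with Lipschitz constant $K$, where $\Omega_0=\{c_{\lambda(x)}:x\in\mathcal{X}\}\subset\Omega_y$, and its weight matrices satisfy $\|W\|_\infty=w$ and $\|\tilde W\|_\infty=\tilde w$.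
   Context: Throughout, $\|\cdot\|_\infty$ denotes the max-norm on $\mathbb{R}^d$ and, for a matrix $A\in\mathbb{R}^{r\times s}$, the induced norm $\|A\|_\infty=\max_{\|x\|_\infty=1}\|Ax\|_\infty$. Fix $T>0$, a delay $\tau\in[0,T]$ and $m\ge1$, and let $\mathcal{C}=C^0([-\tau,0],\mathbb{R}^m)$ with norm $\|u\|_\infty=\sup_{s\in[-\tau,0]}\|u(s)\|_\infty$. For a function $y$ defined on $[t-\tau,t]$, $y_t\in\mathcal{C}$ is $y_t(s)=y(t+s)$. For $a\in\mathbb{R}^m$, $c_a\in\mathcal{C}$ is the constant function $c_a(s)=a$. Given $F:\Omega\to\mathbb{R}^m$, $\Omega\subset\mathbb{R}\times\mathcal{C}$ open, and $(t_0,u)\in\Omega$, a solution of the DDE $\frac{dy}{dt}=F(t,y_t)$ ($t\ge t_0$), $y_{t_0}=u$, is a continuous $y:[t_0-\tau,t_0+c)\to\mathbb{R}^m$, $c\in(0,\infty]$, with $y_{t_0}=u$, $(t,y_t)\in\Omega$ and $y'(t)=F(t,y_t)$ for $t\in[t_0,t_0+c)$; it is denoted $y(t_0,u)$. $\mathcal{I}_a$ denotes the maximal interval of existence of $y(0,c_a)$. For $k\ge1$, $C^{0,k}_b(\Omega,\mathbb{R}^m)$ denotes the continuous maps $F$ on $\Omega$ that are $k$ times continuously Fréchet differentiable in the second variable with the derivatives of orders $1,\dots,k$ bounded on $\Omega$. Neural DDE: let $n,q\ge1$, $\mathcal{X}\subset\mathbb{R}^n$ open, $\lambda(x)=Wx+b$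 with $W\in\mathbb{R}^{m\times n}$, $b\in\mathbb{R}^m$, $\tilde\lambda(y)=\tilde Wy+\tilde b$ with $\tilde W\in\mathbb{R}^{q\times m}$, $\tilde b\in\mathbb{R}^q$, and $F:\Omega_t\times\Omega_y\to\mathbb{R}^m$ with $\Omega_t\subset\mathbb{R}$, $\Omega_y\subset\mathcal{C}$ open, satisfying the well-definedness conditions: $[0,T]\subset\Omega_t$, $\Omega_0:=\{c_{\lambda(x)}:x\in\mathcal{X}\}\subset\Omega_y$, and $[-\tau,T]\subset\mathcal{I}_{\lambda(x)}$ for all $x\in\mathcal{X}$. The associated neural DDE is $\Phi:\mathcal{X}\to\mathbb{R}^q$, $\Phi(x)=\tilde\lambda(y(0,c_{\lambda(x)})(T))$. For $k\ge1$, $\mathrm{NDDE}^k_\tau(\mathcal{X},\mathbb{R}^q)$ is the set of all such $\Phi$ with $F\in C^{0,k}_b(\Omega_t\times\Omega_y,\mathbb{R}^m)$; $\mathrm{NDDE}^0_\tau(\mathcal{X},\mathbb{R}^q)$ is the set of all such $\Phi$ for which the solutions $y(0,c_{\lambda(x)})$ are unique and continuous (and $\Phi$ is continuous). $\Phi$ is non-augmented if $m\le\max\{n,q\}$ and augmented if $m>\max\{n,q\}$. $C^k_b(\mathcal{X},\mathbb{R}^q)$ denotes the $k$ times continuously differentiable maps whose derivatives of orders $1,\dots,k$ are bounded on $\mathcal{X}$. A map $F:\Omega_t\times\Omega_y\to\mathbb{R}^m$ is globally Lipschitz continuous in the second variable on $\Omega_t\times\Omega_0$ with constant $K$ if $\|F(t,u)-F(t,v)\|_\infty\le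 K\|u-v\|_\infty$ for all $t\in\Omega_t$ and $u,v\in\Omega_0$. *)

From HB Require Import structures.
From mathcomp Require Import all_boot all_order all_algebra.
From mathcomp Require Import all_classical all_reals all_analysis.
Import Order.TTheory GRing.Theory Num.Theory.
Import numFieldNormedType.Exports.
Local Open Scope ring_scope.
Local Open Scope classical_set_scope.

Set Implicit Arguments.
Unset Strict Implicit.
Unset Printing Implicit Defensive.

(* Vectors of R^d are column vectors 'cV[R]_d; the library norm `|x|  *)
(* on matrices is the max-norm  max_i |x_i|, i.e. ||.||_oo.            *)

Definition induced_norm_is (R : realType) (r s : nat) (A : 'M[R]_(r, s)) (c : R)
  : Prop :=
  (forall x : 'cV[R]_s, `|x| = 1 -> `|A *m x| <= c) /\
  (exists x : 'cV[R]_s, `|x| = 1 /\ `|A *m x| = c).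

(* The phase space C = C^0([-tau,0], R^m).  An element is represented  *)
(* by a function u : R -> R^m that is continuous and satisfies         *)
(* u s = u (clamp s), i.e. it is constant outside [-tau,0]; this is a  *)
(* canonical (bijective) representation of C^0([-tau,0],R^m).          *)

Definition clamp (R : realType) (tau s : R) : R := Num.min 0 (Num.max (- tau) s).

Definition phase (R : realType) (m : nat) (tau : R) (u : R -> 'cV[R]_m) : Prop :=
  continuous u /\ (forall s, u s = u (clamp tau s)).

Definition supn (R : realType) (m : nat) (tau : R) (u : R -> 'cV[R]_m) : R :=
  sup [set `|u s| | s in [set s : R | - tau <= s <= 0]].

Definition seg (R : realType) (m : nat) (tau : R) (y : R -> 'cV[R]_m) (t : R)
  : R -> 'cV[R]_m := fun s => y (t + clamp tau s).

(* the constant function c_a is the library's  cst a  (= fun _ => a) *)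

(* Generic Frechet calculus (in a second variable) on a normed space   *)
(* given by a carrier V, an admissibility predicate adm (the subspace  *)
(* actually considered) and a norm nV.  The j-th derivative at (t,u)   *)
(* is represented as a map D j t u : seq V -> W, read on lists of      *)
(* length j (a j-linear map).                                          *)

Section Frechet.
Variables (R : realType) (V : lmodType R) (W : normedModType R).
Variables (adm : V -> Prop) (nV : V -> R).

Definition all_adm (hs : seq V) : Prop := forall h, h \in hs -> adm h.
Definition all_unit (hs : seq V) : Prop := forall h, h \in hs -> nV h <= 1.

Definition bounded_multilinear (j : nat) (L : seq V -> W) : Prop :=
  (forall (hs1 hs2 : seq V) (a : R) (u v : V),
      (size hs1 + size hs2).+1 = j -> all_adm hs1 -> all_adm hs2 -> adm u -> adm v ->
      L (hs1 ++ (a *: u + v) :: hs2) = a *: L (hs1 ++ u :: hs2) + L (hs1 ++ v :: hs2)) /\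
  (exists C : R, forall hs, size hs = j -> all_adm hs ->
      `|L hs| <= C * \prod_(h <- hs) nV h).

(* F : R x V -> W on Omega_t x Omega_y is in C^{0,k}_b: continuous,
   k times continuously Frechet differentiable in the second variable
   (derivatives jointly continuous in (t,u), in operator norm), with
   derivatives of orders 1..k bounded on Omega_t x Omega_y. *)
Definition C0kb (k : nat) (Ot : set R) (Oy : set V) (F : R -> V -> W) : Prop :=
  (forall t u, Ot t -> Oy u -> forall e : R, 0 < e -> exists d : R, 0 < d /\
     forall t' u', Ot t' -> Oy u' -> `|t' - t| < d -> nV (u' - u) < d ->
       `|F t' u' - F t u| <= e) /\
  exists D : nat -> R -> V -> seq V -> W,
    (forall t u, Ot t -> Oy u -> D 0%N t u [::] = F t u) /\
    (forall j t u, (j <= k)%N -> Ot t -> Oy u -> bounded_multilinear j (D j t u)) /\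
    (forall j t u, (j < k)%N -> Ot t -> Oy u ->
       forall e : R, 0 < e -> exists d : R, 0 < d /\
       forall h, adm h -> nV h < d -> Oy (u + h) ->
       forall hs, size hs = j -> all_adm hs -> all_unit hs ->
         `|D j t (u + h) hs - D j t u hs - D j.+1 t u (h :: hs)| <= e * nV h) /\
    (forall j t u, (1 <= j <= k)%N -> Ot t -> Oy u ->
       forall e : R, 0 < e -> exists d : R, 0 < d /\
       forall t' u', Ot t' -> Oy u' -> `|t' - t| < d -> nV (u' - u) < d ->
       forall hs, size hs = j -> all_adm hs -> all_unit hs ->
         `|D j t' u' hs - D j t u hs| <= e) /\
    (exists C : R, forall j t u, (1 <= j <= k)%N -> Ot t -> Oy u ->
       forall hs, size hs = j -> all_adm hs -> all_unit hs -> `|D j t u hs| <= C).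

Definition open_in_adm (O : set V) : Prop :=
  (forall u, O u -> adm u) /\
  forall u, O u -> exists e : R, 0 < e /\ forall v, adm v -> nV (v - u) < e -> O v.

End Frechet.

Definition Ckb (R : realType) (n q : nat) (k : nat) (X : set 'cV[R]_n)
  (Psi : 'cV[R]_n -> 'cV[R]_q) : Prop :=
  C0kb (fun _ => True) (fun x : 'cV[R]_n => `|x|) k setT X (fun _ x => Psi x).

Definition has_deriv_within (R : realType) (m : nat) (D : set R)
  (y : R -> 'cV[R]_m) (t : R) (v : 'cV[R]_m) : Prop :=
  forall e : R, 0 < e -> exists d : R, 0 < d /\
    forall h : R, h != 0 -> `|h| < d -> D (t + h) ->
      `|h^-1 *: (y (t + h) - y t) - v| <= e.

Definition dde_solution (R : realType) (m : nat) (tau : R)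
  (Ot : set R) (Oy : set (R -> 'cV[R]_m)) (F : R -> (R -> 'cV[R]_m) -> 'cV[R]_m)
  (t0 : R) (u : R -> 'cV[R]_m) (c : R) (y : R -> 'cV[R]_m) : Prop :=
  0 < c /\
  {within [set s | t0 - tau <= s < t0 + c], continuous y} /\
  (forall s, - tau <= s <= 0 -> y (t0 + s) = u s) /\
  (forall t, t0 <= t < t0 + c ->
     Ot t /\ Oy (seg tau y t) /\
     has_deriv_within [set s | t0 <= s < t0 + c] y t (F t (seg tau y t))).

Definition is_NDDE (R : realType) (n q m : nat) (k : nat) (tau T : R)
  (X : set 'cV[R]_n)
  (Ot : set R) (Oy : set (R -> 'cV[R]_m)) (F : R -> (R -> 'cV[R]_m) -> 'cV[R]_m)
  (W : 'M[R]_(m, n)) (b : 'cV[R]_m) (Wt : 'M[R]_(q, m)) (bt : 'cV[R]_q)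
  (Phi : 'cV[R]_n -> 'cV[R]_q) : Prop :=
  let lam := fun x => W *m x + b in
  open Ot /\ open_in_adm (phase tau) (supn tau) Oy /\
  (forall t, 0 <= t <= T -> Ot t) /\
  (forall x, X x -> Oy (cst (lam x))) /\
  (forall x, X x ->
     (* [-tau, T] is contained in the maximal interval of existence *)
     (exists c y, T < c /\ dde_solution tau Ot Oy F 0 (cst (lam x)) c y) /\
     (forall c1 c2 y1 y2,
        dde_solution tau Ot Oy F 0 (cst (lam x)) c1 y1 ->
        dde_solution tau Ot Oy F 0 (cst (lam x)) c2 y2 ->
        forall s, - tau <= s -> s < c1 -> s < c2 -> y1 s = y2 s) /\
     (forall c y, T < c -> dde_solution tau Ot Oy F 0 (cst (lam x)) c y ->
        Phi x = Wt *m y T + bt)) /\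
  (if k is 0%N then {within X, continuous Phi}
   else C0kb (phase tau) (supn tau) k Ot Oy F).

From HB Require Import structures.
From mathcomp Require Import all_boot all_order all_algebra.
From mathcomp Require Import all_classical all_reals all_analysis.
From mathcomp Require Import ring lra.
Import Order.TTheory GRing.Theory Num.Theory.
Import numFieldNormedType.Exports.
Local Open Scope ring_scope.
Local Open Scope classical_set_scope.

(* The vector field [vfield t u = pulse t *: drift (u (- tau))] reads only the
   delayed state, and the pulse is supported in [[T - 3 tau / 4, T]].  Hence for
   [t <= T] the delayed state [y (t - tau)] is still the initial value [a = W x],
   and the solution is explicit: [y t = a + P t *: drift a] with [P] a primitive
   of the pulse.  The drift is chosen so that [y T] is mapped by [Wt] to [Psi x].
   For the pulse [r (L - r)] of width [L = 3 tau / 4] one has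
   [sup pulse / P T = 2 / tau], which turns the hypothesis on [K tau] into the
   Lipschitz bound.  [W] and [Wt] are [w] and [wt] times a coordinate embedding and
   a coordinate projection, and the derivatives of the field in [u] are those of
   [Psi] composed with the linear map [u |-> W^+ (u (- tau))]. *)

Section RealFacts.
Context {R : realType}.

Definition clip (a b s : R) := Num.min b (Num.max a s).

Lemma clip_cases a b s : a <= b ->
  [\/ s <= a /\ clip a b s = a, a <= s <= b /\ clip a b s = s
    | b <= s /\ clip a b s = b].
Proof.
move=> ab; rewrite /clip; case: (leP a s) => [as_|sa].
  case: (leP b s) => [bs|sb]; first by apply: Or33.
  by apply: Or32; split; rewrite // ltW.
by apply: Or31; split; [exact: ltW | rewrite min_r].
Qed.

Lemma clip_in a b s : a <= b -> a <= clip a b s <= b.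
Proof. by move=> ab; case: (clip_cases _ _ s ab) => [][h ->]; lra. Qed.

Lemma clip_id a b s : a <= s <= b -> clip a b s = s.
Proof.
move=> /andP[h1 h2]; have ab : a <= b by lra.
by case: (clip_cases _ _ s ab) => [][h ->]; lra.
Qed.

Lemma clip_lipschitz a b s s' : a <= b -> `|clip a b s - clip a b s'| <= `|s - s'|.
Proof.
move=> ab; have le1 := ler_norm (s - s'); have le2 := ler_norm (s' - s).
rewrite distrC in le2; rewrite ler_norml.
by case: (clip_cases _ _ s ab) => [][h1 ->]; case: (clip_cases _ _ s' ab) => [][h2 ->];
  apply/andP; split; lra.
Qed.

Lemma is_derive0_of_flat (g : R -> R) (x : R) :
  (forall e, 0 < e -> exists d, 0 < d /\ forall h, h != 0 -> `|h| < d ->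
      `|g (x + h) - g x| <= e * `|h|) ->
  is_derive x (1 : R) g 0.
Proof.
move=> flat.
have cv : (fun h => h^-1 *: ((g \o shift x) (h *: 1) - g x)) @ 0^' --> (0 : R).
  apply/cvgrPdist_le => e e0; have [d [d0 Hd]] := flat e e0.
  rewrite near_withinE; apply/nbhs_normP; exists d => //= t.
  rewrite /ball_ /= sub0r normrN => tlt tne0.
  rewrite sub0r normrN [t%:A]mulr1 addrC.
  have -> : forall u : R, t^-1 *: u = t^-1 * u by [].
  rewrite normrM normfV ler_pdivrMl ?normr_gt0 // mulrC addrC (addrC t).
  exact: Hd.
by apply: DeriveDef; [exact: cvgP cv | exact: cvg_lim cv].
Qed.

(* Composing with [clip a b] turns the flatness of [f] on [a, b] into a zero
   derivative on the whole line. *)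
Lemma eq_of_flat (f : R -> R) (a b : R) : a <= b ->
  (forall t, a <= t <= b -> forall e, 0 < e -> exists d, 0 < d /\
     forall t', a <= t' <= b -> `|t' - t| < d -> `|f t' - f t| <= e * `|t' - t|) ->
  f b = f a.
Proof.
move=> ab flat.
have D x : is_derive x (1 : R) (f \o clip a b) 0.
  apply: is_derive0_of_flat => e e0.
  have [d [d0 Hd]] := flat _ (clip_in _ _ x ab) e e0.
  exists d; split => // h _ hd.
  have L := clip_lipschitz _ _ (x + h) x ab; rewrite addrAC subrr add0r in L.
  apply: le_trans (Hd _ (clip_in _ _ _ ab) (le_lt_trans L hd)) _.
  by rewrite ler_pM2l.
have := is_derive_0_is_cst b a D.
by rewrite /= !clip_id // ?lexx ?ab.
Qed.

Lemma continuous_of_lipschitz (V : normedModType R) (f : R -> V) (C : R) : 0 <= C ->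
  (forall s t, `|f s - f t| <= C * `|s - t|) -> continuous f.
Proof.
move=> C0 lip x; apply/cvgrPdist_le => e e0.
have C1 : 0 < C + 1 by lra.
apply/nbhs_normP; exists (e / (C + 1)); first exact: divr_gt0.
move=> y; rewrite /ball_ /= => hy.
apply: le_trans (lip x y) _.
apply: (le_trans (y := C * (e / (C + 1)))); first by rewrite ler_wpM2l // ltW.
by rewrite mulrA ler_pdivrMr //; nra.
Qed.

Lemma norm_scalerB_le {V : normedModType R} {a A B : R} {Z : V} (a' : R) (Z' : V) :
  `|a| <= A -> `|Z| <= B ->
  `|a' *: Z' - a *: Z| <= `|a' - a| * (B + `|Z' - Z|) + A * `|Z' - Z|.
Proof.
move=> ha hZ.
have -> : a' *: Z' - a *: Z = (a' - a) *: Z' + a *: (Z' - Z).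
  by rewrite scalerBl scalerBr addrA subrK.
apply: le_trans (ler_normD _ _) _; rewrite !normrZ.
apply: lerD; last by apply: ler_wpM2r.
apply: ler_wpM2l => //; apply: le_trans (lerD hZ (lexx `|Z' - Z|)).
by have := ler_normD Z (Z' - Z); rewrite addrC subrK.
Qed.

Lemma product_bound_small {e B A La : R} : 0 < e -> 0 <= B -> 0 <= A -> 0 <= La ->
  exists eps del, 0 < eps /\ 0 < del /\ forall x y, 0 <= x -> x <= La * del ->
    0 <= y <= eps -> x * (B + y) + A * y <= e.
Proof.
move=> e0 B0 A0 La0.
have p1 : 0 < 2 * (A + 1) by lra.
set c := La * (B + 1); have c0 : 0 <= c by rewrite mulr_ge0 //; lra.
exists (Num.min 1 (e / (2 * (A + 1)))), (e / (2 * (c + 1))).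
split; first by rewrite lt_min ltr01 divr_gt0.
split=> [|x y x0 hx /andP[y0 hy]]; first by rewrite divr_gt0 //; lra.
move: hy; rewrite le_min => /andP[y1 y2].
have h1 : x * (B + y) <= e / 2.
  apply: (le_trans (y := La * (e / (2 * (c + 1))) * (B + 1))); first by apply: ler_pM => //; lra.
  rewrite mulrAC -/c [e / 2](_ : _ = c * (e / (2 * (c + 1))) + e / (2 * (c + 1))).
    by rewrite lerDl divr_ge0 //; lra.
  by field; rewrite gt_eqF //; lra.
have h2 : A * y <= e / 2.
  apply: (le_trans (y := A * (e / (2 * (A + 1))))); first exact: ler_wpM2l.
  rewrite mulrA ler_pdivrMr // (_ : e / 2 * (2 * (A + 1)) = e * (A + 1)); last by field.
  nra.
lra.
Qed.

End RealFacts.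

Section MatrixNorm.
Context {R : realType}.

Lemma mx_norm_ge_entry {r c : nat} (M : 'M[R]_(r, c)) i j : `|M i j| <= `|M|.
Proof. by rewrite [`|M|]mx_normrE (le_bigmax _ _ (i, j)). Qed.

Lemma mx_norm_le {r c : nat} (M : 'M[R]_(r, c)) (x : R) :
  0 <= x -> (forall i j, `|M i j| <= x) -> `|M| <= x.
Proof. by move=> x0 H; rewrite [`|M|]mx_normrE; apply: bigmax_le => // -[i j]. Qed.

Lemma mx_eq_of_flat {r c : nat} (f : R -> 'M[R]_(r, c)) (a b : R) : a <= b ->
  (forall t, a <= t <= b -> forall e, 0 < e -> exists d, 0 < d /\
     forall t', a <= t' <= b -> `|t' - t| < d -> `|f t' - f t| <= e * `|t' - t|) ->
  f b = f a.
Proof.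
move=> ab flat; apply/matrixP => i j.
apply: (eq_of_flat (fun s => f s i j)) => // t ht e e0.
have [d [d0 Hd]] := flat t ht e e0; exists d; split => // t' ht' hd.
by apply: le_trans (Hd t' ht' hd); have := mx_norm_ge_entry (f t' - f t) i j; rewrite !mxE.
Qed.

Lemma norm_pid_mulmx_le {r s p : nat} (v : 'cV[R]_s) : `|(pid_mx p : 'M[R]_(r, s)) *m v| <= `|v|.
Proof.
apply: mx_norm_le => // i j; rewrite mxE.
case: (ltnP i s) => [lt_is | le_si].
  rewrite (bigD1 (Ordinal lt_is)) //= big1 => [|k /negPf ne_k]; last first.
    rewrite mxE; case: eqP => [ik|]; rewrite ?mul0r //.
    by move: ne_k; rewrite -(inj_eq val_inj) /= -ik eqxx.
  rewrite addr0 mxE eqxx /=; case: (i < p)%N; rewrite ?mul1r ?mul0r ?normr0 //.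
  exact: mx_norm_ge_entry.
rewrite big1 ?normr0 // => k _; rewrite mxE; case: eqP => [ik|]; rewrite ?mul0r //.
by move: (ltn_ord k); rewrite -ik ltnNge le_si.
Qed.

Lemma pid_mulmxK {r s : nat} (v : 'cV[R]_r) : (r <= s)%N ->
  (pid_mx r : 'M[R]_(r, s)) *m ((pid_mx r : 'M[R]_(s, r)) *m v) = v.
Proof. by move=> rs; rewrite mulmxA pid_mx_id // pid_mx_1 mul1mx. Qed.

Lemma norm_pid_mulmx {r s : nat} (v : 'cV[R]_r) : (r <= s)%N ->
  `|(pid_mx r : 'M[R]_(s, r)) *m v| = `|v|.
Proof.
move=> rs; apply/eqP; rewrite eq_le norm_pid_mulmx_le /=.
by rewrite -{1}(pid_mulmxK v rs) norm_pid_mulmx_le.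
Qed.

Lemma norm_const_mx1 (p : nat) : (0 < p)%N -> `|(const_mx 1 : 'cV[R]_p)| = 1.
Proof.
move=> p0; apply/eqP; rewrite eq_le; apply/andP; split.
  by apply: mx_norm_le => // i j; rewrite mxE normr1.
by have := mx_norm_ge_entry (const_mx 1 : 'cV[R]_p) (Ordinal p0) 0; rewrite mxE normr1.
Qed.

Lemma induced_norm_pid_mx (r s p : nat) (c : R) : 0 <= c ->
  (0 < p)%N -> (p <= r)%N -> (p <= s)%N ->
  induced_norm_is (c *: (pid_mx p : 'M[R]_(r, s))) c.
Proof.
move=> c0 p0 pr ps; split => [x x1|].
  by rewrite -scalemxAl normrZ ger0_norm // -{2}[c]mulr1 -x1 ler_wpM2l ?norm_pid_mulmx_le.
exists ((pid_mx p : 'M[R]_(s, p)) *m const_mx 1).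
rewrite norm_pid_mulmx // norm_const_mx1 //; split => //.
rewrite -scalemxAl normrZ mulmxA pid_mx_id // norm_pid_mulmx //.
by rewrite norm_const_mx1 // mulr1 ger0_norm.
Qed.

End MatrixNorm.

Section PhaseSpace.
Context {R : realType} {m : nat} {tau : R}.
Hypothesis tau_ge0 : 0 <= tau.

Lemma supn_ge (u : R -> 'cV[R]_m) s : continuous u -> - tau <= s <= 0 -> `|u s| <= supn tau u.
Proof.
move=> cu hs; have tau0 : - tau <= 0 by case/andP: hs => h1 h2; lra.
have cf : {within `[- tau, 0], continuous (fun s => `|u s|)}.
  apply: continuous_subspaceT => x.
  exact: continuous_comp (cu x) (@norm_continuous _ _ (u x)).
have [c _ Hc] := EVT_max tau0 cf.
apply: ub_le_sup; last by exists s.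
by exists `|u c| => _ [s' hs' <-]; apply: Hc; rewrite in_itv.
Qed.

Lemma supn_ge_left (u : R -> 'cV[R]_m) : continuous u -> `|u (- tau)| <= supn tau u.
Proof. by move=> cu; apply: supn_ge cu _; rewrite lexx oppr_le0. Qed.

Lemma supn_ge0_phase {u : R -> 'cV[R]_m} : phase tau u -> 0 <= supn tau u.
Proof. by case=> cu _; exact: le_trans (normr_ge0 _) (supn_ge_left u cu). Qed.

Lemma norm_sub_left_le {u u' : R -> 'cV[R]_m} : phase tau u -> phase tau u' ->
  `|u' (- tau) - u (- tau)| <= supn tau (u' - u).
Proof.
move=> [cu _] [cu' _]; apply: (supn_ge_left (u' - u)) => s.
by apply: continuousB; [exact: cu' | exact: cu].
Qed.

Lemma phase_cst (a : 'cV[R]_m) : phase tau (cst a).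
Proof. by split => // s; exact: cst_continuous. Qed.

Lemma seg_left (y : R -> 'cV[R]_m) t : seg tau y t (- tau) = y (t - tau).
Proof. by rewrite /seg /clamp max_r // min_r // oppr_le0. Qed.

Lemma seg_phase (y : R -> 'cV[R]_m) t : continuous y -> phase tau (seg tau y t).
Proof.
have tau0 : - tau <= 0 by rewrite oppr_le0.
move=> cy; split => [s|s].
  have shift_clamp : continuous (fun s => t + clamp tau s).
    apply: (continuous_of_lipschitz _ _ 1) => // s1 s2.
    by rewrite mul1r opprD addrACA subrr add0r; exact: clip_lipschitz.
  exact: continuous_comp (shift_clamp s) (cy _).
by rewrite /seg [clamp tau (clamp tau s)]clip_id // clip_in.
Qed.

End PhaseSpace.

Section Derivatives.
Context {R : realType} {m : nat}.

Lemma has_deriv_within_cst (D : set R) (a : 'cV[R]_m) t : has_deriv_within D (cst a) t 0.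
Proof. by move=> e e0; exists 1; split => // h _ _ _; rewrite subrr scaler0 subr0 normr0 ltW. Qed.

Lemma has_deriv_within_of_taylor (D : set R) (a g : 'cV[R]_m) (H h : R -> R) (C : R) t :
  0 <= C -> (forall d, `|H (t + d) - H t - d * h t| <= C * d ^+ 2) ->
  has_deriv_within D (fun s => a + H s *: g) t (h t *: g).
Proof.
move=> C0 taylor e e0.
have Cg : 0 < C * `|g| + 1 by have := mulr_ge0 C0 (normr_ge0 g); lra.
exists (e / (C * `|g| + 1)); split; first exact: divr_gt0.
move=> d dn0 hd _; have d0 : 0 < `|d| by rewrite normr_gt0.
have -> : d^-1 *: (a + H (t + d) *: g - (a + H t *: g)) - h t *: g =
    (d^-1 * (H (t + d) - H t - d * h t)) *: g.
  by rewrite opprD addrACA subrr add0r -scalerBl scalerA -scalerBl; congr (_ *: _); field.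
rewrite normrZ normrM normfV.
apply: (le_trans (y := `|d|^-1 * (C * d ^+ 2) * `|g|)).
  apply: ler_wpM2r; first exact: normr_ge0.
  by apply: ler_wpM2l; [rewrite invr_ge0 normr_ge0 | exact: taylor].
have -> : `|d|^-1 * (C * d ^+ 2) * `|g| = `|d| * (C * `|g|).
  by rewrite -real_normK ?num_real //; field; rewrite gt_eqF.
apply: (le_trans (y := e / (C * `|g| + 1) * (C * `|g|))).
  by apply: ler_wpM2r; [rewrite mulr_ge0 | exact: ltW].
by rewrite mulrAC ler_pdivrMr //; nra.
Qed.

Lemma eq_of_same_deriv (D : set R) (f g v : R -> 'cV[R]_m) (a b : R) : a <= b ->
  (forall s, a <= s <= b -> D s) ->
  (forall s, a <= s <= b -> has_deriv_within D f s (v s)) ->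
  (forall s, a <= s <= b -> has_deriv_within D g s (v s)) ->
  f b - g b = f a - g a.
Proof.
move=> ab inD df dg.
have := mx_eq_of_flat (fun s => f s - g s) a b ab; apply => s hs e e0.
have e2 : 0 < e / 2 by apply: divr_gt0.
have [d1 [d10 H1]] := df s hs _ e2; have [d2 [d20 H2]] := dg s hs _ e2.
exists (Num.min d1 d2); split => [|s' hs']; first by rewrite lt_min d10 d20.
rewrite lt_min => /andP[hd1 hd2].
have [->|ne] := eqVneq s' s; first by rewrite !subrr !normr0 mulr0.
have dn0 : s' - s != 0 by rewrite subr_eq0.
have ss' : s + (s' - s) = s' by rewrite addrC subrK.
have Ds : D (s + (s' - s)) by rewrite ss'; apply: inD.
have := H1 _ dn0 hd1 Ds; have := H2 _ dn0 hd2 Ds; rewrite ss' => B A.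
have : `|(s' - s)^-1 *: (f s' - g s' - (f s - g s))| <= e.
  have -> : (s' - s)^-1 *: (f s' - g s' - (f s - g s)) =
     ((s' - s)^-1 *: (f s' - f s) - v s) - ((s' - s)^-1 *: (g s' - g s) - v s).
    by apply/matrixP => i j; rewrite !mxE; ring.
  by apply: le_trans (ler_normB _ _) _; rewrite [e]splitr lerD.
by rewrite normrZ normfV ler_pdivrMl ?normr_gt0 // mulrC.
Qed.

End Derivatives.

Section PulseDef.
Context {R : realType}.
Variables (t0 L : R).

Definition ramp (t : R) := clip 0 L (t - t0).
Definition pulse (t : R) := ramp t * (L - ramp t).
Definition pulse_prim (t : R) := L * ramp t ^+ 2 / 2 - ramp t ^+ 3 / 3.

End PulseDef.

Section Pulse.
Context {R : realType} {t0 L : R}.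
Hypothesis L_gt0 : 0 < L.

Local Notation ramp := (ramp t0 L).
Local Notation pulse := (pulse t0 L).
Local Notation pulse_prim := (pulse_prim t0 L).

Let L_ge0 : 0 <= L. Proof. exact: ltW. Qed.

Lemma ramp_in t : 0 <= ramp t <= L.
Proof. exact: clip_in. Qed.

Lemma ramp_lipschitz t t' : `|ramp t' - ramp t| <= `|t' - t|.
Proof. by have := clip_lipschitz _ _ (t' - t0) (t - t0) L_ge0; rewrite opprB addrA subrK. Qed.

Lemma ramp_left t : t <= t0 -> ramp t = 0.
Proof.
move=> le_tt0; have := ramp_in t; rewrite /ramp.
by case: (clip_cases _ _ (t - t0) L_ge0) => [][h ->]; lra.
Qed.

Lemma ramp_right t : t0 + L <= t -> ramp t = L.
Proof.
move=> le_t; have := ramp_in t; rewrite /ramp.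
by case: (clip_cases _ _ (t - t0) L_ge0) => [][h ->]; lra.
Qed.

Lemma pulse_left t : t <= t0 -> pulse t = 0.
Proof. by move=> h; rewrite /pulse ramp_left // mul0r. Qed.

Lemma pulse_right t : t0 + L <= t -> pulse t = 0.
Proof. by move=> h; rewrite /pulse ramp_right // subrr mulr0. Qed.

Lemma pulse_prim_left t : t <= t0 -> pulse_prim t = 0.
Proof. by move=> h; rewrite /pulse_prim ramp_left // !expr0n /= !mulr0 !mul0r subrr. Qed.

Lemma pulse_prim_right : pulse_prim (t0 + L) = L ^+ 3 / 6.
Proof. by rewrite /pulse_prim ramp_right // !expr2 !exprS !expr0; field. Qed.

Lemma pulse_bounds t : 0 <= pulse t <= L ^+ 2 / 4.
Proof.
have /andP[h1 h2] := ramp_in t; rewrite /pulse; apply/andP; split; first nra.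
by have := sqr_ge0 (L / 2 - ramp t); rewrite !expr2 => ?; nra.
Qed.

Lemma pulse_lipschitz t t' : `|pulse t' - pulse t| <= L * `|t' - t|.
Proof.
have /andP[h1 h2] := ramp_in t; have /andP[h3 h4] := ramp_in t'.
have -> : pulse t' - pulse t = (ramp t' - ramp t) * (L - ramp t' - ramp t) by rewrite /pulse; ring.
rewrite normrM mulrC ler_pM ?normr_ge0 ?ramp_lipschitz //.
by rewrite ler_norml; apply/andP; split; lra.
Qed.

Lemma pulse_prim_lipschitz t t' : `|pulse_prim t' - pulse_prim t| <= 2 * L ^+ 2 * `|t' - t|.
Proof.
have /andP[h1 h2] := ramp_in t; have /andP[h3 h4] := ramp_in t'.
have -> : pulse_prim t' - pulse_prim t = (ramp t' - ramp t) *
    (ramp t * (L - ramp t) + (ramp t' - ramp t) * (L / 2 - ramp t - (ramp t' - ramp t) / 3)).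
  by rewrite /pulse_prim !expr2 !exprS !expr0; field.
rewrite normrM mulrC ler_pM ?normr_ge0 ?ramp_lipschitz //.
by rewrite ler_norml !expr2; apply/andP; split; nra.
Qed.

(* [pulse_prim = cubic \o ramp] and [pulse = cubic' \o ramp]. *)
Let cubic (r : R) := L * r ^+ 2 / 2 - r ^+ 3 / 3.

Let cubic_taylor (r r' : R) : 0 <= r <= L -> 0 <= r' <= L ->
  `|cubic r' - cubic r - (r' - r) * (r * (L - r))| <= L * (r' - r) ^+ 2.
Proof.
move=> /andP[h1 h2] /andP[h3 h4].
have -> : cubic r' - cubic r - (r' - r) * (r * (L - r)) =
    (r' - r) ^+ 2 * (L / 2 - r - (r' - r) / 3) by rewrite /cubic !expr2 !exprS !expr0; field.
rewrite normrM ger0_norm ?sqr_ge0 // mulrC ler_wpM2r ?sqr_ge0 //.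
by rewrite ler_norml; apply/andP; split; lra.
Qed.

(* The ramp can only differ from the identity increment where it is saturated,
   and there the derivative [pulse t] is small. *)
Let ramp_defect t d : `|(ramp (t + d) - ramp t - d) * pulse t| <= L * d ^+ 2.
Proof.
have Ld2 : 0 <= L * d ^+ 2 by rewrite mulr_ge0 ?sqr_ge0.
rewrite /pulse /ramp; case: (clip_cases _ _ (t - t0) L_ge0) => [][h ->];
  rewrite ?mul0r ?subrr ?mulr0 ?normr0 //.
rewrite (_ : t + d - t0 = t - t0 + d); last by ring.
case/andP: h; move: (t - t0) => x h1 h2.
have xL : 0 <= x * (L - x) <= L * x by apply/andP; split; nra.
rewrite normrM [`|x * _|]ger0_norm ?(andP xL).1 // !expr2.
case: (clip_cases _ _ (x + d) L_ge0) => [][h ->].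
- rewrite ger0_norm; last lra.
  apply: (le_trans (y := - d * (L * - d))); last by rewrite mulrCA mulrNN.
  by apply: ler_pM; nra.
- by rewrite (_ : x + d - x - d = 0) ?normr0 ?mul0r; [nra | ring].
- rewrite ler0_norm; last lra.
  apply: (le_trans (y := d * (L * d))); last by rewrite mulrCA.
  by apply: ler_pM; nra.
Qed.

Lemma pulse_prim_taylor t d :
  `|pulse_prim (t + d) - pulse_prim t - d * pulse t| <= 2 * L * d ^+ 2.
Proof.
have h1 := cubic_taylor _ _ (ramp_in t) (ramp_in (t + d)).
have h2 := ramp_defect t d.
have h3 : (ramp (t + d) - ramp t) ^+ 2 <= d ^+ 2.
  rewrite -(real_normK (num_real (ramp (t + d) - ramp t))) -(real_normK (num_real d)).
  have := ramp_lipschitz t (t + d); rewrite addrAC subrr add0r => hr.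
  by rewrite lerXn2r ?nnegrE ?normr_ge0.
have h4 : L * (ramp (t + d) - ramp t) ^+ 2 <= L * d ^+ 2 by rewrite ler_wpM2l.
have -> : pulse_prim (t + d) - pulse_prim t - d * pulse t =
    (cubic (ramp (t + d)) - cubic (ramp t) - (ramp (t + d) - ramp t) * (ramp t * (L - ramp t)))
    + (ramp (t + d) - ramp t - d) * pulse t.
  by rewrite /pulse_prim /pulse /cubic; ring.
apply: le_trans (ler_normD _ _) _; lra.
Qed.

End Pulse.

Section Construction.
Context {R : realType}.
Variables (n q : nat) (T : R) (X : set 'cV[R]_n) (Psi : 'cV[R]_n -> 'cV[R]_q)
  (KPsi K tau w wt : R).
Hypotheses (n_gt0 : (0 < n)%N) (q_gt0 : (0 < q)%N) (openX : open X)
  (KPsi_ge0 : 0 <= KPsi)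
  (Psi_lipschitz : forall x1 x2, X x1 -> X x2 -> `|Psi x1 - Psi x2| <= KPsi * `|x1 - x2|)
  (K_ge0 : 0 <= K) (tau_gt0 : 0 < tau) (tau_le_T : tau <= T) (w_gt0 : 0 < w) (wt_gt0 : 0 < wt)
  (K_large : 2 * (1 + KPsi / (w * wt)) <= K * tau).

Local Notation m := (maxn n q).

Let tau_ge0 : 0 <= tau. Proof. exact: ltW. Qed.

Definition pulse_len : R := 3 * tau / 4.
Definition pulse_start : R := T - pulse_len.
Definition pulse_mass : R := pulse_len ^+ 3 / 6.

Definition W : 'M[R]_(m, n) := w *: pid_mx n.
Definition Wt : 'M[R]_(q, m) := wt *: pid_mx q.
Definition Winv (v : 'cV[R]_m) : 'cV[R]_n := w^-1 *: ((pid_mx n : 'M[R]_(n, m)) *m v).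
Definition target (v : 'cV[R]_m) : 'cV[R]_m :=
  wt^-1 *: ((pid_mx q : 'M[R]_(m, q)) *m Psi (Winv v)).
Definition drift (v : 'cV[R]_m) : 'cV[R]_m := pulse_mass^-1 *: (target v - v).

Definition vfield (t : R) (u : R -> 'cV[R]_m) : 'cV[R]_m :=
  pulse pulse_start pulse_len t *: drift (u (- tau)).
Definition dom_y (u : R -> 'cV[R]_m) : Prop := phase tau u /\ X (Winv (u (- tau))).
Definition sol (a : 'cV[R]_m) (t : R) : 'cV[R]_m :=
  a + pulse_prim pulse_start pulse_len t *: drift a.

Lemma pulse_len_gt0 : 0 < pulse_len.
Proof. by rewrite /pulse_len; have := tau_gt0; lra. Qed.

Lemma pulse_start_ge : tau / 4 <= pulse_start.
Proof. by rewrite /pulse_start /pulse_len; have := tau_gt0; have := tau_le_T; lra. Qed.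

Lemma pulse_end : pulse_start + pulse_len = T.
Proof. by rewrite /pulse_start subrK. Qed.

Lemma pulse_mass_gt0 : 0 < pulse_mass.
Proof. by rewrite /pulse_mass divr_gt0 // exprn_gt0 // pulse_len_gt0. Qed.

Lemma WinvK x : Winv (W *m x) = x.
Proof.
rewrite /Winv /W -scalemxAl scalemxAr scalerA mulVf ?gt_eqF // scale1r.
by rewrite pid_mulmxK // leq_maxl.
Qed.

Lemma WinvD (v v' : 'cV[R]_m) : Winv (v + v') = Winv v + Winv v'.
Proof. by rewrite /Winv mulmxDr scalerDr. Qed.

Lemma Winv_lipschitz (v v' : 'cV[R]_m) : `|Winv v - Winv v'| <= w^-1 * `|v - v'|.
Proof.
rewrite /Winv -scalerBr -mulmxBr normrZ ger0_norm; last by rewrite invr_ge0 ltW.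
by rewrite ler_pM2l ?invr_gt0 // norm_pid_mulmx_le.
Qed.

Lemma norm_Winv (v : 'cV[R]_m) : `|Winv v| <= w^-1 * `|v|.
Proof. by have := Winv_lipschitz v 0; rewrite !subr0 /Winv mulmx0 scaler0 subr0. Qed.

Lemma norm_W (x : 'cV[R]_n) : `|W *m x| = w * `|x|.
Proof. by rewrite /W -scalemxAl normrZ norm_pid_mulmx ?leq_maxl // ger0_norm // ltW. Qed.

Lemma induced_norm_W : induced_norm_is W w.
Proof. by apply: induced_norm_pid_mx; rewrite ?ltW ?leq_maxl. Qed.

Lemma induced_norm_Wt : induced_norm_is Wt wt.
Proof. by apply: induced_norm_pid_mx; rewrite ?ltW ?leq_maxr. Qed.

Lemma sol_T a : sol a T = target a.
Proof.
rewrite /sol -pulse_end (pulse_prim_right pulse_len_gt0) // -/pulse_mass /drift.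
by rewrite scalerA mulfV ?gt_eqF ?pulse_mass_gt0 // scale1r addrC subrK.
Qed.

Lemma Wt_sol_T x : Wt *m sol (W *m x + 0) T + 0 = Psi x.
Proof.
rewrite !addr0 sol_T /target WinvK /Wt -scalemxAl scalemxAr scalerA mulfV ?gt_eqF //.
by rewrite scale1r pid_mulmxK // leq_maxr.
Qed.

Lemma dom_y_open : open_in_adm (phase tau) (supn tau) dom_y.
Proof.
split=> [u []//|u [pu Xu]].
have /nbhs_normP[r r0 Hr] := openX _ Xu.
exists (r * w); split => [|v pv hv]; first exact: mulr_gt0.
split => //; apply: Hr; rewrite /ball_ /= -normrN opprB.
apply: le_lt_trans (Winv_lipschitz _ _) _.
rewrite ltr_pdivrMl // mulrC.
exact: le_lt_trans (norm_sub_left_le tau_ge0 pu pv) hv.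
Qed.

Lemma dom_y_cst x : X x -> dom_y (cst (W *m x + 0)).
Proof. by move=> Xx; split; [exact: phase_cst | rewrite /= addr0 WinvK]. Qed.

Lemma driftB (v1 v2 : 'cV[R]_m) : drift v1 - drift v2 = pulse_mass^-1 *:
  (wt^-1 *: ((pid_mx q : 'M[R]_(m, q)) *m (Psi (Winv v1) - Psi (Winv v2))) - (v1 - v2)).
Proof. by rewrite /drift /target mulmxBr; apply/matrixP => i j; rewrite !mxE; ring. Qed.

Lemma drift_lipschitz (v v' : 'cV[R]_m) :
  `|drift v' - drift v| <= pulse_mass^-1 * (wt^-1 * `|Psi (Winv v') - Psi (Winv v)| + `|v' - v|).
Proof.
have m0 : 0 < pulse_mass^-1 by rewrite invr_gt0 pulse_mass_gt0.
have wt0 : 0 < wt^-1 by rewrite invr_gt0.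
rewrite driftB normrZ gtr0_norm // ler_pM2l //.
apply: le_trans (ler_normB _ _) _; rewrite lerD2r normrZ gtr0_norm // ler_pM2l //.
exact: norm_pid_mulmx_le.
Qed.

(* Since [sup pulse / pulse_mass = 2 / tau], this is where [K_large] is spent. *)
Lemma pulse_drift_budget {A h : R} : 0 <= A -> 0 <= h <= pulse_len ^+ 2 / 4 ->
  h * (pulse_mass^-1 * (wt^-1 * (KPsi * A) + w * A)) <= K * (w * A).
Proof.
move=> A0 /andP[h0 h_le].
have B : 0 <= pulse_mass^-1 * (wt^-1 * (KPsi * A) + w * A).
  apply: mulr_ge0; first by rewrite invr_ge0 ltW ?pulse_mass_gt0.
  have wt0 : 0 <= wt^-1 by rewrite invr_ge0 ltW.
  by rewrite addr_ge0 ?mulr_ge0 // ltW.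
apply: le_trans (ler_wpM2r B h_le) _.
have -> : pulse_len ^+ 2 / 4 * (pulse_mass^-1 * (wt^-1 * (KPsi * A) + w * A)) =
   (w * A / tau) * (2 * (1 + KPsi / (w * wt))).
  by rewrite /pulse_mass /pulse_len; field; rewrite ?gt_eqF.
have -> : K * (w * A) = (w * A / tau) * (K * tau) by field; rewrite gt_eqF.
have wA : 0 <= w * A / tau by apply: divr_ge0; [apply: mulr_ge0 => //; exact: ltW | exact: ltW].
by apply: ler_wpM2l.
Qed.

Lemma vfield_lipschitz t x1 x2 : X x1 -> X x2 ->
  `|vfield t (cst (W *m x1 + 0)) - vfield t (cst (W *m x2 + 0))|
    <= K * supn tau (cst (W *m x1 + 0) - cst (W *m x2 + 0)).
Proof.
move=> X1 X2.
have c12 : continuous (cst (W *m x1 + 0) - cst (W *m x2 + 0) : R -> 'cV[R]_m).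
  by move=> s; apply: continuousB; exact: cst_continuous.
apply: le_trans _ (ler_wpM2l K_ge0 (supn_ge_left tau_ge0 _ c12)).
have hb := pulse_bounds (t0 := pulse_start) pulse_len_gt0 t.
rewrite /= !addr0.
have -> : (cst (W *m x1) - cst (W *m x2)) (- tau) = W *m (x1 - x2) by rewrite mulmxBr.
rewrite norm_W /vfield -scalerBr normrZ ger0_norm ?(andP hb).1 //.
apply: le_trans (pulse_drift_budget (normr_ge0 (x1 - x2)) hb).
apply: ler_wpM2l; first by case/andP: hb.
apply: le_trans (drift_lipschitz _ _) _; rewrite /= !WinvK -mulmxBr norm_W.
rewrite ler_pM2l ?invr_gt0 ?pulse_mass_gt0 // lerD2r ler_pM2l ?invr_gt0 //.
exact: Psi_lipschitz.
Qed.

Lemma sol_continuous a : continuous (sol a).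
Proof.
apply: (continuous_of_lipschitz _ _ (2 * pulse_len ^+ 2 * `|drift a|)) => [|s t].
  by rewrite mulr_ge0 // mulr_ge0 // sqr_ge0.
rewrite /sol opprD addrACA subrr add0r -scalerBl normrZ mulrAC.
by apply: ler_wpM2r => //; exact: pulse_prim_lipschitz pulse_len_gt0 t s.
Qed.

Lemma sol_left a s : s <= pulse_start -> sol a s = a.
Proof. by move=> h; rewrite /sol (pulse_prim_left pulse_len_gt0) // scale0r addr0. Qed.

Lemma sol_deriv a (D : set R) t :
  has_deriv_within D (sol a) t (pulse pulse_start pulse_len t *: drift a).
Proof.
apply: (has_deriv_within_of_taylor _ _ _ _ _ (2 * pulse_len)).
  by rewrite mulr_ge0 ?ltW ?pulse_len_gt0.
exact: pulse_prim_taylor pulse_len_gt0 t.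
Qed.

Lemma sol_is_dde_solution x : X x ->
  dde_solution tau setT dom_y vfield 0 (cst (W *m x + 0)) (T + tau / 8) (sol (W *m x + 0)).
Proof.
move=> Xx; set a := W *m x + 0.
have start_ge := pulse_start_ge; have tau0 := tau_gt0; have tauT := tau_le_T.
split; first lra.
split; first exact/continuous_subspaceT/sol_continuous.
split=> [s /andP[h1 h2]|t /andP[h1 h2]]; first by rewrite add0r sol_left //; lra.
have delayed : seg tau (sol a) t (- tau) = a.
  by rewrite (seg_left tau_ge0) sol_left //; move: h2; rewrite /pulse_start /pulse_len add0r; lra.
split=> //; split; last by rewrite /vfield delayed; exact: sol_deriv.
by split; [exact/(seg_phase tau_ge0)/sol_continuous | rewrite delayed /a addr0 WinvK].
Qed.

Section Uniqueness.
Context {a : 'cV[R]_m} {c : R} {y : R -> 'cV[R]_m}.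
Hypothesis y_sol : dde_solution tau setT dom_y vfield 0 (cst a) c y.

Let y0 : y 0 = a.
Proof. by have [_ [_ [init _]]] := y_sol; rewrite -(add0r 0) init // lexx oppr_le0 ltW. Qed.

Let deriv_y t : 0 <= t < 0 + c ->
  has_deriv_within [set s | 0 <= s < 0 + c] y t (vfield t (seg tau y t)).
Proof. by move=> ht; have [_ [_ [_ /(_ t ht)[_ []]]]] := y_sol. Qed.

Lemma dde_solution_before_pulse t : 0 <= t < c -> t <= pulse_start -> y t = a.
Proof.
move=> /andP[t0 tc] ht.
have inD s : 0 <= s <= t -> 0 <= s < 0 + c.
  by case/andP=> s0 st; rewrite add0r s0 (le_lt_trans st tc).
suff : y t - a = y 0 - a by rewrite y0 subrr => /subr0_eq.
apply: (eq_of_same_deriv [set s | 0 <= s < 0 + c] y (cst a) (fun _ => 0) 0 t t0 inD) => s hs.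
  move: (deriv_y _ (inD s hs)); rewrite /vfield (pulse_left pulse_len_gt0) ?scale0r //.
  by case/andP: hs => _ st; exact: le_trans st ht.
exact: has_deriv_within_cst.
Qed.

(* The delayed state stays equal to [a] throughout the pulse, since
   [t - tau < pulse_start] for [t <= T]. *)
Lemma vfield_along_dde_solution s : 0 <= s < c ->
  vfield s (seg tau y s) = pulse pulse_start pulse_len s *: drift a.
Proof.
move=> /andP[s0 sc]; have tau0 := tau_gt0; case: (leP T s) => hs.
  by rewrite /vfield (pulse_right pulse_len_gt0) ?scale0r ?pulse_end.
rewrite /vfield (seg_left tau_ge0); congr (_ *: drift _).
case: (leP (s - tau) 0) => h2.
  by have [_ [_ [init _]]] := y_sol; rewrite -(add0r (s - tau)) init //; lra.
apply: dde_solution_before_pulse; last by rewrite /pulse_start /pulse_len; lra.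
by rewrite ltW //= (le_lt_trans _ sc) // lerBlDr lerDl ltW.
Qed.

Lemma dde_solution_eq_sol t : 0 <= t < c -> y t = sol a t.
Proof.
move=> /andP[t0 tc].
have inD s : 0 <= s <= t -> 0 <= s < 0 + c.
  by case/andP=> s0 st; rewrite add0r s0 (le_lt_trans st tc).
suff : y t - sol a t = y 0 - sol a 0.
  rewrite y0 (sol_left a 0) ?subrr => [/subr0_eq //|].
  by have := pulse_start_ge; have := tau_gt0; lra.
apply: (eq_of_same_deriv [set s | 0 <= s < 0 + c] _ _
  (fun s => pulse pulse_start pulse_len s *: drift a) 0 t t0 inD) => s hs; last exact: sol_deriv.
rewrite -vfield_along_dde_solution; first exact: deriv_y _ (inD s hs).
by have := inD s hs; rewrite add0r.
Qed.

End Uniqueness.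

Lemma norm_pulse_le t : `|pulse pulse_start pulse_len t| <= pulse_len ^+ 2 / 4.
Proof.
by have /andP[h1 h2] := pulse_bounds (t0 := pulse_start) pulse_len_gt0 t; rewrite ger0_norm.
Qed.

Lemma norm_pulse_mass_le t :
  `|pulse pulse_start pulse_len t / pulse_mass| <= pulse_len ^+ 2 / 4 / pulse_mass.
Proof.
have M0 : 0 < pulse_mass^-1 by rewrite invr_gt0 pulse_mass_gt0.
by rewrite normrM (gtr0_norm M0) ler_pM2r // norm_pulse_le.
Qed.

Section Regularity.
Variables (k : nat) (DPsi : nat -> 'cV[R]_n -> seq 'cV[R]_n -> 'cV[R]_q).
Local Notation nrm := (fun x : 'cV[R]_n => `|x|).
Hypothesis Psi_continuous : forall x, X x -> forall e, 0 < e -> exists d, 0 < d /\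
  forall x', X x' -> `|x' - x| < d -> `|Psi x' - Psi x| <= e.
Hypothesis DPsi0 : forall x, X x -> DPsi 0 x [::] = Psi x.
Hypothesis DPsi_multilinear : forall j x, (j <= k)%N -> X x ->
  bounded_multilinear (fun _ => True) nrm j (DPsi j x).
Hypothesis DPsi_deriv : forall j x, (j < k)%N -> X x -> forall e, 0 < e ->
  exists d, 0 < d /\ forall h, `|h| < d -> X (x + h) -> forall hs, size hs = j ->
  all_unit nrm hs -> `|DPsi j (x + h) hs - DPsi j x hs - DPsi j.+1 x (h :: hs)| <= e * `|h|.
Hypothesis DPsi_continuous : forall j x, (1 <= j <= k)%N -> X x -> forall e, 0 < e ->
  exists d, 0 < d /\ forall x', X x' -> `|x' - x| < d -> forall hs, size hs = j ->
  all_unit nrm hs -> `|DPsi j x' hs - DPsi j x hs| <= e.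
Hypothesis DPsi_bounded : exists C, forall j x, (1 <= j <= k)%N -> X x ->
  forall hs, size hs = j -> all_unit nrm hs -> `|DPsi j x hs| <= C.

Definition id_deriv (j : nat) (v : 'cV[R]_m) (vs : seq 'cV[R]_m) : 'cV[R]_m :=
  match j with 0 => v | 1 => head 0 vs | _ => 0 end.

Definition at_left (hs : seq (R -> 'cV[R]_m)) : seq 'cV[R]_m := [seq h (- tau) | h <- hs].
Definition proj_left (hs : seq (R -> 'cV[R]_m)) : seq 'cV[R]_n :=
  [seq (pid_mx n : 'M[R]_(n, m)) *m h (- tau) | h <- hs].

(* [Winv] is [w^-1] times a projection, whence the factor [w ^- j] in front of
   the [j]-linear derivative of [Psi]. *)
Definition vfield_deriv (j : nat) (t : R) (u : R -> 'cV[R]_m) (hs : seq (R -> 'cV[R]_m)) :=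
  (pulse pulse_start pulse_len t / pulse_mass) *:
  ((w ^- j / wt) *: ((pid_mx q : 'M[R]_(m, q)) *m DPsi j (Winv (u (- tau))) (proj_left hs))
   - id_deriv j (u (- tau)) (at_left hs)).

Lemma vfield_continuous t u : dom_y u -> forall e, 0 < e -> exists d, 0 < d /\
  forall t' u', dom_y u' -> `|t' - t| < d -> supn tau (u' - u) < d ->
  `|vfield t' u' - vfield t u| <= e.
Proof.
move=> [pu Xu] e e0; have M0 := pulse_mass_gt0.
have len2_ge0 : 0 <= pulse_len ^+ 2 / 4 by rewrite divr_ge0 ?sqr_ge0.
have [eps [del [eps0 [del0 small]]]] :=
  product_bound_small e0 (normr_ge0 (drift (u (- tau)))) len2_ge0 (ltW pulse_len_gt0).
have e1 : 0 < eps * pulse_mass * wt / 2 by rewrite divr_gt0 // !mulr_gt0.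
have [d1 [d10 Hd1]] := Psi_continuous _ Xu _ e1.
have e2 : 0 < eps * pulse_mass / 2 by rewrite divr_gt0 // mulr_gt0.
exists (Num.min del (Num.min (w * d1) (eps * pulse_mass / 2))).
split=> [|t' u' [pu' Xu']]; first by rewrite !lt_min del0 e2 mulr_gt0.
rewrite !lt_min => /andP[ht _] /andP[_ /andP[hu2 hu3]].
have hv := norm_sub_left_le tau_ge0 pu pu'.
have hx : `|Winv (u' (- tau)) - Winv (u (- tau))| < d1.
  apply: le_lt_trans (Winv_lipschitz _ _) _.
  by rewrite ltr_pdivrMl // (le_lt_trans hv).
have hdrift : `|drift (u' (- tau)) - drift (u (- tau))| <= eps.
  apply: le_trans (drift_lipschitz _ _) _.
  rewrite (_ : eps = pulse_mass^-1 * (wt^-1 * (eps * pulse_mass * wt / 2) + eps * pulse_mass / 2));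
    last by field; rewrite !gt_eqF.
  rewrite ler_pM2l ?invr_gt0 // lerD ?ler_pM2l ?invr_gt0 //; first exact: Hd1.
  exact: le_trans hv (ltW hu3).
apply: le_trans (norm_scalerB_le _ _ (norm_pulse_le t) (lexx _)) _.
apply: small; rewrite ?normr_ge0 ?hdrift //.
apply: le_trans (pulse_lipschitz pulse_len_gt0 t t') _.
by rewrite ler_pM2l ?pulse_len_gt0 // ltW.
Qed.

Lemma vfield_deriv0 t u : dom_y u -> vfield_deriv 0 t u [::] = vfield t u.
Proof.
move=> [_ Xu]; rewrite /vfield_deriv /vfield /drift /target /= DPsi0 //.
by rewrite expr0 invr1 mul1r scalerA mulrC.
Qed.

Lemma id_derivD j v (es1 es2 : seq 'cV[R]_m) e1 e2 (a : R) :
  (size es1 + size es2).+1 = j ->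
  id_deriv j v (es1 ++ (a *: e1 + e2) :: es2) =
    a *: id_deriv j v (es1 ++ e1 :: es2) + id_deriv j v (es1 ++ e2 :: es2).
Proof.
case: j => [|[|j]] //= [/eqP]; last by rewrite scaler0 addr0.
by rewrite addn_eq0 !size_eq0 => /andP[/eqP -> /eqP ->].
Qed.

Lemma id_deriv_succ j v z (es : seq 'cV[R]_m) :
  id_deriv j (v + z) es - id_deriv j v es - id_deriv j.+1 v (z :: es) = 0.
Proof. by case: j => [|[|j]] /=; rewrite ?(addrC v) ?addrK !subrr. Qed.

Lemma norm_id_deriv_le j v (hs : seq (R -> 'cV[R]_m)) : size hs = j -> all_adm (phase tau) hs ->
  `|id_deriv j v (at_left hs)| <= (`|v| + 1) * \prod_(h <- hs) supn tau h.
Proof.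
move=> <- hadm; have v1 : 1 <= `|v| + 1 by rewrite lerDr.
have prod_ge0 : 0 <= \prod_(h <- hs) supn tau h.
  by rewrite big_seq prodr_ge0 // => h /hadm/(supn_ge0_phase tau_ge0).
case: hs hadm prod_ge0 => [|h1 [|h2 hs]] hadm prod_ge0 /=.
- by rewrite big_nil mulr1 lerDl.
- rewrite big_cons big_nil mulr1 -[X in X <= _]mul1r.
  have /hadm ph1 := mem_head h1 [::].
  apply: ler_pM; rewrite ?normr_ge0 //; exact: supn_ge_left tau_ge0 h1 ph1.1.
- by rewrite normr0 mulr_ge0 // (le_trans ler01).
Qed.

Lemma vfield_deriv_multilinear j t u : (j <= k)%N -> dom_y u ->
  bounded_multilinear (phase tau) (supn tau) j (vfield_deriv j t u).
Proof.
move=> jk [pu Xu]; have [DPsi_lin [C HC]] := DPsi_multilinear _ _ jk Xu.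
set P := (pid_mx n : 'M[R]_(n, m)); set Q := (pid_mx q : 'M[R]_(m, q)).
split=> [hs1 hs2 a u1 v1 hsz _ _ _ _|].
  rewrite /vfield_deriv /proj_left /at_left !map_cat /=.
  have -> : P *m (a *: u1 + v1) (- tau) = a *: (P *m u1 (- tau)) + P *m v1 (- tau).
    by rewrite mulmxDr -scalemxAr.
  rewrite DPsi_lin ?size_map // id_derivD ?size_map // mulmxDr -scalemxAr.
  move: (Q *m _) (Q *m _) (id_deriv _ _ _) (id_deriv _ _ _) => A B l1 l2.
  by apply/matrixP => i i'; rewrite !mxE; ring.
exists (`|pulse pulse_start pulse_len t / pulse_mass| *
  (`|w ^- j / wt| * `|C| + (`|u (- tau)| + 1))).
move=> hs hsz hadm; set PS := \prod_(h <- hs) supn tau h.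
have PS0 : 0 <= PS by rewrite /PS big_seq prodr_ge0 // => h /hadm/(supn_ge0_phase tau_ge0).
have hP : \prod_(p <- proj_left hs) `|p| <= PS.
  rewrite /proj_left big_map /PS !big_seq; apply: ler_prod => h /hadm ph.
  by rewrite normr_ge0 (le_trans (norm_pid_mulmx_le _) (supn_ge_left tau_ge0 h ph.1)).
have hD : `|DPsi j (Winv (u (- tau))) (proj_left hs)| <= `|C| * PS.
  apply: le_trans (HC _ _ (fun _ _ => I)) _; first by rewrite size_map.
  apply: (le_trans (y := `|C| * \prod_(p <- proj_left hs) `|p|)); last exact: ler_wpM2l.
  by apply: ler_wpM2r; [exact: prodr_ge0 | exact: ler_norm].
rewrite /vfield_deriv normrZ -[X in _ <= X]mulrA; apply: ler_wpM2l => //; rewrite mulrDl.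
apply: le_trans (ler_normB _ _) _; apply: lerD; last exact: norm_id_deriv_le.
rewrite normrZ -mulrA; apply: ler_wpM2l => //; exact: le_trans (norm_pid_mulmx_le _) hD.
Qed.

Lemma DPsi_scale1 j x (c : R) z ps : (j < k)%N -> X x -> size ps = j ->
  DPsi j.+1 x ((c *: z) :: ps) = c *: DPsi j.+1 x (z :: ps).
Proof.
move=> jk Xx psz; have [DPsi_lin _] := DPsi_multilinear _ _ jk Xx.
have lin a u v := DPsi_lin [::] ps a u v (congr1 S psz) (fun _ _ => I) (fun _ _ => I) I I.
have D0 : DPsi j.+1 x (0 :: ps) = 0.
  have := lin 1 0 0; rewrite /= !scale1r addr0.
  by rewrite -{1}[DPsi j.+1 x (0 :: ps)]addr0 => /addrI/esym.
by have := lin c z 0; rewrite /= !addr0 D0 addr0.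
Qed.

Lemma proj_left_unit {hs} : all_adm (phase tau) hs -> all_unit (supn tau) hs ->
  all_unit nrm (proj_left hs).
Proof.
move=> hadm hunit _ /mapP[g /[dup] /hadm pg /hunit ug ->].
exact: le_trans (norm_pid_mulmx_le _) (le_trans (supn_ge_left tau_ge0 g pg.1) ug).
Qed.

Lemma id_deriv_indep j v v' (es : seq 'cV[R]_m) : (0 < j)%N -> id_deriv j v es = id_deriv j v' es.
Proof. by case: j. Qed.

Lemma norm_id_deriv_le1 j v (hs : seq (R -> 'cV[R]_m)) : (0 < j)%N ->
  all_adm (phase tau) hs -> all_unit (supn tau) hs -> `|id_deriv j v (at_left hs)| <= 1.
Proof.
case: j => [|[|j]] // _; last by rewrite normr0.
case: hs => [|h1 hs] hadm hunit /=; first by rewrite normr0.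
have h1_in := mem_head h1 hs.
exact: le_trans (supn_ge_left tau_ge0 h1 (hadm _ h1_in).1) (hunit _ h1_in).
Qed.

Lemma vfield_deriv_step j t u : (j < k)%N -> dom_y u -> forall e, 0 < e ->
  exists d, 0 < d /\ forall h, phase tau h -> supn tau h < d -> dom_y (u + h) ->
  forall hs, size hs = j -> all_adm (phase tau) hs -> all_unit (supn tau) hs ->
  `|vfield_deriv j t (u + h) hs - vfield_deriv j t u hs - vfield_deriv j.+1 t u (h :: hs)|
    <= e * supn tau h.
Proof.
move=> jk [pu Xu] e e0.
set x := Winv (u (- tau)); set a := pulse pulse_start pulse_len t / pulse_mass.
set b := w ^- j / wt; set Q := (pid_mx q : 'M[R]_(m, q)).
have b0 : 0 <= b by rewrite divr_ge0 ?invr_ge0 ?exprn_ge0 ?ltW.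
have wi0 : 0 <= w^-1 by rewrite invr_ge0 ltW.
have abw0 : 0 <= `|a| * b * w^-1 by do 2 apply: mulr_ge0 => //.
set c0 := `|a| * b * w^-1 + 1; have c00 : 0 < c0 by rewrite /c0; lra.
have [d [d0 Hd]] := DPsi_deriv _ _ jk Xu _ (divr_gt0 e0 c00).
exists (d * w); split => [|h ph hd [_ Xuh] hs hsz hadm hunit]; first exact: mulr_gt0.
set z := h (- tau); set h' := Winv z.
have hh' : `|h'| <= w^-1 * supn tau h.
  by apply: le_trans (norm_Winv _) _; apply: ler_wpM2l => //; exact: supn_ge_left tau_ge0 h ph.1.
have hd' : `|h'| < d by apply: le_lt_trans hh' _; rewrite ltr_pdivrMl // mulrC.
have Xxh : X (x + h') by rewrite -WinvD.
have punit := proj_left_unit hadm hunit.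
have psz : size (proj_left hs) = j by rewrite size_map.
have HD := Hd _ hd' Xxh (proj_left hs) psz punit.
have wexp : w ^- j.+1 / wt * w = b.
  have wj : w ^+ j != 0 by rewrite expf_neq0 // gt_eqF.
  by rewrite /b exprS invfM; field; rewrite wj !gt_eqF.
(* The factor [w] in [pid_mx n *m z = w *: Winv z] compensates one factor [w^-1]. *)
have cancel (A1 A2 A3 : 'cV[R]_q) (l1 l2 l3 : 'cV[R]_m) : l1 - l2 - l3 = 0 ->
    a *: (b *: (Q *m A1) - l1) - a *: (b *: (Q *m A2) - l2)
      - a *: (w ^- j.+1 / wt *: (Q *m (w *: A3)) - l3) = a *: (b *: (Q *m (A1 - A2 - A3))).
  move=> /eqP; rewrite subr_eq add0r => /eqP <-.
  rewrite -scalemxAr scalerA wexp !mulmxBr.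
  move: (Q *m A1) (Q *m A2) (Q *m A3) => B1 B2 B3.
  by apply/matrixP => i i'; rewrite !mxE; ring.
have Pz : (pid_mx n : 'M[R]_(n, m)) *m z = w *: h'.
  by rewrite /h' /Winv scalerA mulfV ?gt_eqF // scale1r.
rewrite /vfield_deriv /proj_left /at_left /= -/a -/b -/Q -/z -/x.
rewrite (_ : Winv (u (- tau) + z) = x + h') ?WinvD // Pz DPsi_scale1 ?size_map //.
rewrite cancel ?id_deriv_succ // [`|a *: _|]normrZ [`|b *: _|]normrZ (ger0_norm b0).
apply: (le_trans (y := `|a| * (b * (e / c0 * (w^-1 * supn tau h))))).
  apply: ler_wpM2l => //; apply: ler_wpM2l => //.
  apply: le_trans (norm_pid_mulmx_le _) (le_trans HD _).
  by apply: ler_wpM2l hh'; rewrite ltW // divr_gt0.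
have -> : `|a| * (b * (e / c0 * (w^-1 * supn tau h))) = `|a| * b * w^-1 / c0 * (e * supn tau h).
  by field; rewrite !gt_eqF.
rewrite -[X in _ <= X]mul1r; apply: ler_wpM2r.
  by rewrite mulr_ge0 ?(supn_ge0_phase tau_ge0) ?ltW.
by rewrite ler_pdivrMr // mul1r /c0 lerDl.
Qed.

Let wj_wt_ge0 j : 0 <= w ^- j / wt.
Proof. by rewrite divr_ge0 ?invr_ge0 ?exprn_ge0 ?ltW. Qed.

Lemma norm_vfield_deriv_core_le {j : nat} x v {hs : seq (R -> 'cV[R]_m)} {C : R} : (0 < j)%N ->
  all_adm (phase tau) hs -> all_unit (supn tau) hs -> `|DPsi j x (proj_left hs)| <= C ->
  `|(w ^- j / wt) *: ((pid_mx q : 'M[R]_(m, q)) *m DPsi j x (proj_left hs))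
    - id_deriv j v (at_left hs)| <= w ^- j / wt * `|C| + 1.
Proof.
move=> j0 hadm hunit hC.
apply: le_trans (ler_normB _ _) _; apply: lerD; last exact: norm_id_deriv_le1.
rewrite normrZ ger0_norm //; apply: ler_wpM2l => //.
exact: le_trans (norm_pid_mulmx_le _) (le_trans hC (ler_norm _)).
Qed.

Lemma vfield_deriv_continuous j t u : (1 <= j <= k)%N -> dom_y u -> forall e, 0 < e ->
  exists d, 0 < d /\ forall t' u', dom_y u' -> `|t' - t| < d -> supn tau (u' - u) < d ->
  forall hs, size hs = j -> all_adm (phase tau) hs -> all_unit (supn tau) hs ->
  `|vfield_deriv j t' u' hs - vfield_deriv j t u hs| <= e.
Proof.
move=> jk [pu Xu] e e0; have j0 : (0 < j)%N by case/andP: jk.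
have [C HC] := DPsi_bounded; have M0 := pulse_mass_gt0.
set b := w ^- j / wt; have b0 : 0 <= b := wj_wt_ge0 j.
set B := b * `|C| + 1; have B0 : 0 <= B by have := mulr_ge0 b0 (normr_ge0 C); rewrite /B; lra.
have A0 : 0 <= pulse_len ^+ 2 / 4 / pulse_mass.
  by apply: divr_ge0; [apply: divr_ge0 => //; exact: sqr_ge0 | exact: ltW].
have La0 : 0 <= pulse_len / pulse_mass by apply: divr_ge0; apply: ltW; rewrite ?pulse_len_gt0.
have [eps [del [eps0 [del0 small]]]] := product_bound_small e0 B0 A0 La0.
have e1 : 0 < eps / (b + 1) by rewrite divr_gt0 //; lra.
have [d1 [d10 Hd1]] := DPsi_continuous _ _ jk Xu _ e1.
exists (Num.min del (w * d1)); split => [|t' u' [pu' Xu']]; first by rewrite lt_min del0 mulr_gt0.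
rewrite !lt_min => /andP[ht _] /andP[_ hu] hs hsz hadm hunit.
have hx : `|Winv (u' (- tau)) - Winv (u (- tau))| < d1.
  apply: le_lt_trans (Winv_lipschitz _ _) _.
  by rewrite ltr_pdivrMl // (le_lt_trans (norm_sub_left_le tau_ge0 pu pu')).
have psz : size (proj_left hs) = j by rewrite size_map.
have punit := proj_left_unit hadm hunit.
have HD := Hd1 _ Xu' hx _ psz punit.
rewrite /vfield_deriv (id_deriv_indep _ (u' (- tau)) (u (- tau))) //.
apply: le_trans (norm_scalerB_le _ _ (norm_pulse_mass_le t)
  (norm_vfield_deriv_core_le _ _ j0 hadm hunit (HC _ _ jk Xu _ psz punit))) _.
apply: small; first exact: normr_ge0.
  rewrite -mulrBl normrM (gtr0_norm (x := pulse_mass^-1)) ?invr_gt0 // mulrAC.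
  apply: ler_wpM2r; first by rewrite invr_ge0 ltW.
  apply: le_trans (pulse_lipschitz pulse_len_gt0 t t') _.
  by apply: ler_wpM2l; rewrite ?ltW ?pulse_len_gt0.
rewrite normr_ge0 /= opprB addrA subrK -scalerBr -mulmxBr normrZ ger0_norm //.
apply: le_trans (ler_wpM2l b0 (le_trans (norm_pid_mulmx_le _) HD)) _.
by rewrite mulrA ler_pdivrMr; [nra | lra].
Qed.

Lemma vfield_deriv_bounded : exists C, forall j t u, (1 <= j <= k)%N -> dom_y u ->
  forall hs, size hs = j -> all_adm (phase tau) hs -> all_unit (supn tau) hs ->
  `|vfield_deriv j t u hs| <= C.
Proof.
have [C HC] := DPsi_bounded.
exists (pulse_len ^+ 2 / 4 / pulse_mass * ((\sum_(i < k.+1) w ^- i) / wt * `|C| + 1)).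
move=> j t u jk [pu Xu] hs hsz hadm hunit; have j0 : (0 < j)%N by case/andP: jk.
have psz : size (proj_left hs) = j by rewrite size_map.
have HD := HC _ _ jk Xu _ psz (proj_left_unit hadm hunit).
rewrite /vfield_deriv normrZ; apply: ler_pM; rewrite ?normr_ge0 ?norm_pulse_mass_le //.
apply: le_trans (norm_vfield_deriv_core_le _ _ j0 hadm hunit HD) _.
rewrite lerD2r; apply: ler_wpM2r => //; apply: ler_wpM2r; first by rewrite invr_ge0 ltW.
have jlt : (j < k.+1)%N by case/andP: jk.
rewrite (bigD1 (Ordinal jlt)) //= lerDl; apply: sumr_ge0 => i _.
by rewrite invr_ge0 exprn_ge0 // ltW.
Qed.

Lemma vfield_C0kb : C0kb (phase tau) (supn tau) k setT dom_y vfield.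
Proof.
split=> [t u _ du e e0|].
  have [d [d0 Hd]] := vfield_continuous t u du e e0.
  by exists d; split => // t' u' _; exact: Hd.
exists vfield_deriv; split=> [t u _|]; first exact: vfield_deriv0.
split=> [j t u jk _|]; first exact: vfield_deriv_multilinear.
split=> [j t u jk _ du|]; first exact: vfield_deriv_step.
split=> [j t u jk _ du e e0|].
  have [d [d0 Hd]] := vfield_deriv_continuous j t u jk du e e0.
  by exists d; split => // t' u' _; exact: Hd.
have [C HC] := vfield_deriv_bounded.
by exists C => j t u jk _; exact: HC.
Qed.

End Regularity.

Lemma vfield_C0kb_of_Ckb k : Ckb k X Psi -> C0kb (phase tau) (supn tau) k setT dom_y vfield.
Proof.
move=> [cont [D [D0 [Dlin [Dder [Dcont [C Dbnd]]]]]]].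
have near0 d : 0 < d -> `|0 - 0 : R| < d by rewrite subrr normr0.
apply: (vfield_C0kb k (fun j => D j 0))
  => [x Xx e e0|x Xx|j x jk Xx|j x jk Xx e e0|j x jk Xx e e0|].
- have [d [d0 Hd]] := cont 0 x I Xx e e0.
  by exists d; split => // x' Xx' hx; exact: Hd (near0 _ d0) hx.
- exact: D0.
- exact: Dlin.
- have [d [d0 Hd]] := Dder j 0 x jk I Xx e e0.
  by exists d; split => // h hd Xxh hs hsz hu; exact: Hd h I hd Xxh hs hsz (fun _ _ => I) hu.
- have [d [d0 Hd]] := Dcont j 0 x jk I Xx e e0.
  exists d; split => // x' Xx' hx hs hsz hu.
  exact: Hd 0 x' I Xx' (near0 _ d0) hx hs hsz (fun _ _ => I) hu.
- by exists C => j x jk Xx hs hsz hu; exact: Dbnd j 0 x jk I Xx hs hsz (fun _ _ => I) hu.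
Qed.

Lemma is_NDDE_construction k :
  (k = 0%N -> {within X, continuous Psi}) -> ((0 < k)%N -> Ckb k X Psi) ->
  is_NDDE k tau T X setT dom_y vfield W 0 Wt 0 Psi.
Proof.
move=> Psi_cont Psi_Ckb; have tau0 := tau_gt0; have tauT := tau_le_T.
split; first exact: openT.
split; first exact: dom_y_open.
split=> //; split; first exact: dom_y_cst.
split=> [x Xx|]; last first.
  case: k Psi_cont Psi_Ckb => [Psi_cont _ | k _ Psi_Ckb]; first exact: Psi_cont.
  exact: vfield_C0kb_of_Ckb (Psi_Ckb erefl).
split.
  by exists (T + tau / 8), (sol (W *m x + 0)); split; [lra | exact: sol_is_dde_solution].
split=> [c1 c2 y1 y2 s1 s2 s ge_s lt1 lt2|c y Tc sol_y].
  case: (leP s 0) => [le_s0|gt_s0].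
    have hs : - tau <= s <= 0 by rewrite ge_s le_s0.
    have [_ [_ [i1 _]]] := s1; have [_ [_ [i2 _]]] := s2.
    by have := i1 s hs; have := i2 s hs; rewrite add0r => -> ->.
  by rewrite (dde_solution_eq_sol s1) ?(dde_solution_eq_sol s2) ?ltW ?lt1 ?lt2.
by rewrite (dde_solution_eq_sol sol_y) ?Wt_sol_T // Tc andbT; lra.
Qed.

End Construction.

Theorem mainTheorem3 (R : realType) (k n q : nat) (T : R)
  (X : set 'cV[R]_n) (Psi : 'cV[R]_n -> 'cV[R]_q) (KPsi K tau w wt : R) :
  (0 < n)%N -> (0 < q)%N -> open X ->
  (k = 0%N -> {within X, continuous Psi}) ->
  ((0 < k)%N -> Ckb k X Psi) ->
  0 <= KPsi ->
  (forall x1 x2, X x1 -> X x2 -> `|Psi x1 - Psi x2| <= KPsi * `|x1 - x2|) ->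
  0 <= K -> 0 < tau -> tau <= T -> 0 < w -> 0 < wt ->
  2 * (1 + KPsi / (w * wt)) <= K * tau ->
  exists (Oy : set (R -> 'cV[R]_(maxn n q)))
         (F : R -> (R -> 'cV[R]_(maxn n q)) -> 'cV[R]_(maxn n q))
         (W : 'M[R]_(maxn n q, n)) (b : 'cV[R]_(maxn n q))
         (Wt : 'M[R]_(q, maxn n q)) (bt : 'cV[R]_q)
         (Phi : 'cV[R]_n -> 'cV[R]_q),
    is_NDDE k tau T X setT Oy F W b Wt bt Phi /\
    (forall x, X x -> Phi x = Psi x) /\
    (forall t x1 x2, X x1 -> X x2 ->
       `|F t (cst (W *m x1 + b)) - F t (cst (W *m x2 + b))|
         <= K * supn tau (cst (W *m x1 + b) - cst (W *m x2 + b))) /\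
    induced_norm_is W w /\ induced_norm_is Wt wt.
Proof.
move=> n_gt0 q_gt0 openX Psi_cont Psi_Ckb KPsi_ge0 Psi_lip K_ge0 tau_gt0 tau_le_T w_gt0 wt_gt0
  K_large.
exists (dom_y n q X tau w), (vfield n q T Psi tau w wt), (W n q w), 0, (Wt n q wt), 0, Psi.
split; first by apply: is_NDDE_construction => //.
split=> //; split; first exact: (vfield_lipschitz n q T X Psi KPsi).
by split; [exact: induced_norm_W | exact: induced_norm_Wt].
Qed.
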